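(* Let $p$ be an odd prime, let $l>2$ be an integer with $l\mid p-1$, and let $\omega$ be a primitive $l$-th root of unity in $\mathbb{F}_p$. Let $n=lp$ if $l$ is even and $n=2lp$ if $l$ is odd. For each $(r_1,r_2,r_3)\in\{(2,1,1),(1,2,1),(1,1,2)\}$, the cyclic code $\mathcal{C}_{(r_1,r_2,r_3)}$ of length $n$ over $\mathbb{F}_p$ generated by $(x-1)^{r_1}(x+1)^{r_2}(x-\omega)^{r_3}$ is an MDS symbol-pair code with minimum symbol-pair distance $d_p=6$.
   Context: For $\mathbf{x}=(x_0,\dots,x_{n-1})\in\mathbb{F}_p^n$, the symbol-pair weight is $\omega_p(\mathbf{x})=|\{i:(x_i,x_{i+1})\neq(0,0)\}|$ (indices modulo $n$), and the symbol-pair distance is $D_p(\mathbf{x},\mathbf{y})=|\{i:(x_i,x_{i+1})\neq(y_i,y_{i+1})\}|$. The minimum symbol-pair distance $d_p(\mathcal{C})$ is the minimum of $D_p$ over distinct codewords. A code of length $n$ with minimum symbol-pair distance $d_p$ is an MDS symbol-pair code if $|\mathcal{C}|=p^{n-d_p+2}$. Vectors are identified with polynomials in $\mathbb{F}_p[x]/\langle x^n-1\rangle$; the cyclic code generated by $g(x)\mid x^n-1$ is the ideal $\langle g(x)\rangle$. *)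

From HB Require Import structures.
From mathcomp Require Import all_boot all_order all_algebra.
Set Implicit Arguments.
Unset Strict Implicit.
Unset Printing Implicit Defensive.
Import GRing.Theory.
Local Open Scope ring_scope.

Section SymbolPair.
Variables (F : finFieldType) (n : nat).

Definition pair_weight (x : 'rV[F]_n) : nat :=
  #|[set i : 'I_n | (x ord0 i != 0) || (x ord0 (ordS i) != 0)]|.

Definition pair_dist (x y : 'rV[F]_n) : nat :=
  #|[set i : 'I_n | (x ord0 i != y ord0 i) || (x ord0 (ordS i) != y ord0 (ordS i))]|.

(* the cyclic code <g(x)> in F[x]/<x^n - 1>; elements of the quotient ring are
   represented by their unique representative of degree < n (coefficient
   vectors 'rV_n), the codewords being the coefficient vectors of
   (g * f) mod (x^n - 1). *)
Definition cyclic_code (g : {poly F}) : {set 'rV[F]_n} :=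
  [set poly_rV ((g * rVpoly f) %% ('X^n - 1)) | f : 'rV[F]_n].

Definition min_pair_dist_is (C : {set 'rV[F]_n}) (d : nat) : Prop :=
  (exists x y, [/\ x \in C, y \in C, x != y & pair_dist x y = d]) /\
  (forall x y, x \in C -> y \in C -> x != y -> (d <= pair_dist x y)%N).

Definition MDS_symbol_pair (C : {set 'rV[F]_n}) (d : nat) : Prop :=
  min_pair_dist_is C d /\ #|C| = (#|F| ^ (n - d + 2))%N.

End SymbolPair.

From HB Require Import structures.
From mathcomp Require Import all_boot all_order all_algebra zify ring.
Set Implicit Arguments.
Unset Strict Implicit.
Unset Printing Implicit Defensive.
Import GRing.Theory.
Local Open Scope ring_scope.

(* Rotating a nonzero codeword so that a run of nonzero symbols starts at
   position 0 gives a codeword polynomial c with c_0 <> 0 = c_(n-1) and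
   4 <= m = deg c <= n - 2.  The pairs at 0, m - 1, m and n - 1 are then
   nonzero, and two more nonzero pairs lie in 1..m-2 unless c is one of
   c_0 + c_m X^m, c_0 + c_1 X + c_m X^m or c_0 + c_(m-1) X^(m-1) + c_m X^m.
   None of these is divisible by the generator g: vanishing at 1 and -1 in odd
   characteristic forces both exponents of such a trinomial to be even, while a
   binomial vanishing at 1, -1 and w, and doubly at some z <> 0, has its
   exponent divisible by 2, l and p, hence by n.  So the minimum pair distance
   is at least 6; g itself attains 6, and |C| = p^(n - deg g) = p^(n - 4).
   Finally g divides X^n - 1 = (X^lcm(2,l) - 1)^p, in which each of 1, -1, w
   is a root of multiplicity p >= 2. *)

Lemma poly_supportE (R : nzRingType) (c : {poly R}) (s : seq nat) : uniq s ->
  (forall k, k \notin s -> c`_k = 0) -> c = \sum_(k <- s) c`_k *: 'X^k.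
Proof.
move=> s_uniq c_out; apply/polyP => k; rewrite coef_sum.
have [k_in | k_out] := boolP (k \in s).
  rewrite (bigD1_seq k) //= coefZ coefXn eqxx mulr1 big1_seq ?addr0 // => t /andP[t_neq_k _].
  by rewrite coefZ coefXn eq_sym (negbTE t_neq_k) mulr0.
rewrite c_out // big1_seq // => t /andP[_ t_in].
rewrite coefZ coefXn; case: eqP => [k_eq_t | _]; last by rewrite mulr0.
by rewrite k_eq_t t_in in k_out.
Qed.

Section PairWeight.
Variables (F : finFieldType) (n : nat).

Definition rotl (x : 'rV[F]_n) : 'rV[F]_n := \row_i x 0 (ordS i).

Definition pair_nz (c : {poly F}) (k : nat) : bool :=
  (c`_k != 0) || (c`_(k.+1 %% n) != 0).

Lemma pair_dist_weight (x y : 'rV[F]_n) : pair_dist x y = pair_weight (x - y).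
Proof. by apply: eq_card => i; rewrite !inE !mxE !subr_eq0. Qed.

Lemma pair_weight_rotl (x : 'rV[F]_n) : pair_weight (rotl x) = pair_weight x.
Proof.
rewrite /pair_weight -(card_imset _ (@ordS_inj n)); apply: eq_card => i.
rewrite inE; apply/imsetP/idP => [[j + ->] | x_i].
  by rewrite inE !mxE.
by exists (ord_pred i); rewrite ?inE ?mxE ord_predK.
Qed.

Lemma pair_weight_count (x : 'rV[F]_n) :
  pair_weight x = count (pair_nz (rVpoly x)) (iota 0 n).
Proof.
rewrite /pair_weight cardsE cardE size_filter -val_enum_ord count_map enumT.
apply: eq_count => i; rewrite /pair_nz /= -[(i.+1 %% n)%N]/(val (ordS i)).
by rewrite !coef_rVpoly_ord.
Qed.

Lemma iter_rotlE k (x : 'rV[F]_n) i : iter k rotl x 0 i = x 0 (iter k (@ordS n) i).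
Proof. by elim: k x => // k IHk x; rewrite iterSr IHk mxE. Qed.

Lemma iter_ordS_pred k (i : 'I_n) :
  iter k (@ordS n) (ord_pred i) = ord_pred (iter k (@ordS n) i).
Proof. by rewrite -{2}(ord_predK i) -iterSr iterS ordSK. Qed.

Lemma val_iter_ordS k (i : 'I_n) : val (iter k (@ordS n) i) = ((i + k) %% n)%N.
Proof.
elim: k => [|k IHk] /=; first by rewrite addn0 modn_small.
by rewrite IHk -addn1 modnDml addn1 addnS.
Qed.

Lemma exists_run_start (x : 'rV[F]_n) : x != 0 -> (exists i, x 0 i = 0) ->
  exists i, x 0 i != 0 /\ x 0 (ord_pred i) = 0.
Proof.
move=> x_neq0 [j x_j].
pose run_start i := (x 0 i != 0) && (x 0 (ord_pred i) == 0).
have [i /andP[x_i /eqP x_pred] | no_start] := pickP run_start; first by exists i.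
case/eqP: x_neq0; apply/rowP => i; rewrite mxE.
have zero_orbit k : x 0 (iter k (@ordS n) j) = 0.
  elim: k => //= k IHk; have := no_start (ordS (iter k (@ordS n) j)).
  by rewrite /run_start ordSK IHk eqxx andbT => /negbFE/eqP.
have -> : i = iter (i + (n - j)) (@ordS n) j.
  apply: val_inj; rewrite val_iter_ordS addnCA subnKC ?modnDr ?modn_small //.
  exact: ltnW.
exact: zero_orbit.
Qed.

End PairWeight.

Section CyclicCode.
Variables (F : finFieldType) (n : nat) (g : {poly F}).
Hypotheses (n_gt0 : (0 < n)%N) (g_dvd : g %| 'X^n - 1).

Lemma size_Xn_sub1 : size ('X^n - 1 : {poly F}) = n.+1.
Proof. by rewrite -polyC1 size_XnsubC. Qed.

Lemma generator_neq0 : g != 0.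
Proof. by apply: contraTneq g_dvd => ->; rewrite dvd0p -size_poly_eq0 size_Xn_sub1. Qed.

Lemma mem_cyclic_code x : (x \in cyclic_code n g) = (g %| rVpoly x).
Proof.
apply/imsetP/idP => [[f _ ->] | g_x].
  rewrite poly_rV_K; first by rewrite -dvdp_mod // dvdp_mulr.
  by rewrite -ltnS -size_Xn_sub1 ltn_modp -size_poly_eq0 size_Xn_sub1.
exists (poly_rV (rVpoly x %/ g)) => //.
rewrite poly_rV_K; last first.
  by rewrite size_divp ?generator_neq0 // (leq_trans (leq_subr _ _)) ?size_poly.
by rewrite mulrC divpK // modp_small ?rVpolyK // size_Xn_sub1 ltnS size_poly.
Qed.

Lemma card_cyclic_code : #|cyclic_code n g| = (#|F| ^ (n - (size g).-1))%N.
Proof.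
set d := (size g).-1.
have size_g : size g = d.+1 by rewrite prednK // size_poly_gt0 generator_neq0.
have d_le_n : (d <= n)%N.
  by rewrite -ltnS -size_g -size_Xn_sub1 dvdp_leq // -size_poly_eq0 size_Xn_sub1.
have size_mul (h : 'rV_(n - d)) : (size (g * rVpoly h)%R <= n)%N.
  apply: leq_trans (size_polyMleq _ _) _; rewrite size_g.
  by have : (size (rVpoly h) <= n - d)%N := size_poly _ _; lia.
have -> : cyclic_code n g = [set poly_rV (g * rVpoly h) | h : 'rV_(n - d)].
  apply/setP => x; rewrite mem_cyclic_code; apply/idP/imsetP => [g_x | [h _ ->]].
    exists (poly_rV (rVpoly x %/ g)) => //; rewrite poly_rV_K.
      by rewrite mulrC divpK // rVpolyK.
    by rewrite size_divp ?generator_neq0 // size_g leq_sub2r // size_poly.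
  by rewrite poly_rV_K ?dvdp_mulr.
rewrite card_imset ?cardsT ?card_mx ?mul1n // => h1 h2 /(congr1 rVpoly).
rewrite !poly_rV_K // => /(mulfI generator_neq0).
exact: (can_inj (@rVpolyK _ _)).
Qed.

Lemma coef_rVpoly_rotl (x : 'rV[F]_n) k : (k < n)%N ->
  (rVpoly (rotl x))`_k = (rVpoly x)`_(k.+1 %% n).
Proof.
by move=> lt_kn; rewrite -[k]/(val (Ordinal lt_kn)) coef_rVpoly_ord mxE -coef_rVpoly_ord.
Qed.

Lemma rVpoly_rotl (x : 'rV[F]_n) :
  'X * rVpoly (rotl x) = rVpoly x + ((rVpoly x)`_0)%:P * ('X^n - 1).
Proof.
have coef_ge (v : 'rV[F]_n) k : (n <= k)%N -> (rVpoly v)`_k = 0.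
  by move=> le_nk; rewrite nth_default // (leq_trans (size_poly _ _)).
apply/polyP => -[|k]; rewrite coefXM coefD coefCM coefB coefXn coef1 /=.
  by rewrite eq_sym (gtn_eqF n_gt0) sub0r mulrN1 subrr.
case: (ltngtP k.+1 n) => [lt_kn | lt_nk | eq_kn].
- by rewrite coef_rVpoly_rotl ?modn_small // ?(ltnW lt_kn) // subr0 mulr0 addr0.
- by rewrite (coef_ge x k.+1) ?(ltnW lt_nk) // (coef_ge (rotl x) k) // subr0 mulr0 addr0.
- rewrite coef_rVpoly_rotl ?eq_kn // modnn (coef_ge x n) //.
  by rewrite subr0 mulr1 add0r.
Qed.

Lemma rotl_code (x : 'rV[F]_n) : g %| rVpoly x -> g %| rVpoly (rotl x).
Proof.
move=> g_x; have g_coprime_X : coprimep g 'X.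
  apply: coprimep_dvdr g_dvd _; rewrite -[X in coprimep _ X]subr0 -polyC0.
  by rewrite coprimep_XsubC rootE !hornerE expr0n eqn0Ngt n_gt0 sub0r oppr_eq0 oner_eq0.
by rewrite -(Gauss_dvdpl _ g_coprime_X) mulrC rVpoly_rotl dvdp_add // dvdp_mull.
Qed.

Section MinimumPairDistance.
Hypotheses (n_ge6 : (6 <= n)%N) (size_g : size g = 5%N).
(* The sparse shapes left over by the counting argument of count_pair_nz_ge6. *)
Hypothesis no_binomial : forall (a b : F) m, a != 0 -> b != 0 -> (0 < m < n)%N ->
  ~~ (g %| a%:P + b *: 'X^m).
Hypothesis no_trinomial : forall (a b d : F) i j, a != 0 -> b != 0 -> d != 0 ->
  (0 < i < j)%N -> (i == 1%N) || (j == i.+1) ->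
  ~~ (g %| a%:P + b *: 'X^i + d *: 'X^j).

Let size_g_le : (size g <= n)%N.
Proof. by rewrite size_g; lia. Qed.

Lemma count_pair_nz_ge6 (c : {poly F}) : g %| c -> (size c <= n)%N ->
  c`_0 != 0 -> c`_n.-1 = 0 -> (6 <= count (pair_nz n c) (iota 0 n))%N.
Proof.
move=> g_c size_c c0 c_last.
have c_neq0 : c != 0 by apply: contraNneq c0 => ->; rewrite coef0.
have [m size_cE] : {m | size c = m.+1} by exists (size c).-1; rewrite prednK // size_poly_gt0.
have cm : c`_m != 0 by rewrite -[m]/(m.+1.-1) -size_cE -lead_coefE lead_coef_eq0.
have m_ge4 : (4 <= m)%N by have := dvdp_leq c_neq0 g_c; rewrite size_g size_cE.
have m_lt : (m < n.-1)%N.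
  have : m != n.-1 by apply: contraNneq cm => ->; rewrite c_last.
  by move: size_c; rewrite size_cE; lia.
have c_gt k : (m < k)%N -> c`_k = 0 by move=> lt_mk; rewrite nth_default ?size_cE.
have pair_inner k : (k.+1 < n)%N -> pair_nz n c k = (c`_k != 0) || (c`_k.+1 != 0).
  by move=> lt_kn; rewrite /pair_nz modn_small.
have pair_last : pair_nz n c n.-1.
  by rewrite /pair_nz prednK ?modnn ?c0 ?orbT //; lia.
(* The pairs at 0, m - 1, m and n - 1 are always nonzero. *)
suff [i [j [lt_0ij le_jm pair_i pair_j]]] : exists i j,
    [/\ (0 < i < j)%N, (j <= m.-2)%N, pair_nz n c i & pair_nz n c j].
  rewrite -size_filter; apply: (uniq_leq_size (s1 := [:: 0; i; j; m.-1; m; n.-1]%N)).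
    by rewrite /= !inE; lia.
  apply/allP; rewrite /= !mem_filter !mem_iota pair_last pair_i pair_j.
  by rewrite !pair_inner ?(ltn_predK m_ge4) ?c0 ?cm ?orbT /=; lia.
have [/hasP[k] | /hasPn mid0] := boolP (has (fun k => c`_k != 0) (iota 2 (m - 3))).
  rewrite mem_iota => /andP[k_ge2 k_lt] ck.
  by exists k.-1, k; split; rewrite ?pair_inner ?(ltn_predK k_ge2) ?ck ?orbT //; lia.
have c_sparse : c = (c`_0)%:P + c`_1 *: 'X^1 + c`_m.-1 *: 'X^(m.-1) + c`_m *: 'X^m.
  rewrite {1}(@poly_supportE _ c [:: 0; 1; m.-1; m]%N); last first.
  - move=> k; rewrite !inE => k_out; have [/c_gt // | le_km] := ltnP m k.
    by apply/eqP/negPn/mid0; rewrite mem_iota; lia.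
  - by rewrite /= !inE; lia.
  by rewrite !big_cons big_nil addr0 expr0 alg_polyC !addrA.
have [c1 | c1] := eqVneq c`_1 0; have [cm1 | cm1] := eqVneq c`_m.-1 0.
- have m_range : (0 < m < n)%N by lia.
  case/negP: (no_binomial c0 cm m_range).
  by move: g_c; rewrite {1}c_sparse c1 cm1 !scale0r !addr0.
- have m1_range : (0 < m.-1 < m)%N by lia.
  have m1_adj : (m.-1 == 1%N) || (m == m.-1.+1) by rewrite (ltn_predK m_ge4) eqxx orbT.
  case/negP: (no_trinomial c0 cm1 cm m1_range m1_adj).
  by move: g_c; rewrite {1}c_sparse c1 scale0r addr0.
- have m_range : (0 < 1 < m)%N by lia.
  case/negP: (no_trinomial c0 c1 cm m_range isT).
  by move: g_c; rewrite {1}c_sparse cm1 scale0r addr0.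
exists 1%N, m.-2; split; rewrite ?pair_inner ?c1 //; try lia.
by rewrite (_ : m.-2.+1 = m.-1) ?cm1 ?orbT //; lia.
Qed.

Lemma pair_weight_code_ge6 (x : 'rV[F]_n) : x \in cyclic_code n g -> x != 0 ->
  (6 <= pair_weight x)%N.
Proof.
rewrite mem_cyclic_code => g_x x_neq0.
have [/existsP[j /eqP x_j] | /existsPn x_nz] := boolP [exists i, x 0 i == 0]; last first.
  apply: leq_trans n_ge6 _; rewrite -{1}(card_ord n) -cardsT subset_leq_card //.
  by apply/subsetP => i _; rewrite inE x_nz.
have [i [x_i x_pred]] := exists_run_start x_neq0 (ex_intro _ j x_j).
set y := iter i (@rotl F n) x.
have g_y : g %| rVpoly y by rewrite /y; elim: (val i) => //= k IHk; apply: rotl_code.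
have -> : pair_weight x = pair_weight y.
  by rewrite /y; elim: (val i) => //= k IHk; rewrite pair_weight_rotl.
pose i0 := Ordinal n_gt0.
have y_i0 : y 0 i0 = x 0 i.
  by rewrite iter_rotlE; congr (x 0 _); apply: val_inj; rewrite val_iter_ordS add0n modn_small.
have val_pred_i0 : val (ord_pred i0) = n.-1 by rewrite /= modn_small // ltn_predL.
rewrite pair_weight_count count_pair_nz_ge6 ?size_poly //.
  by rewrite -[0%N]/(val i0) coef_rVpoly_ord y_i0.
rewrite -val_pred_i0 coef_rVpoly_ord iter_rotlE iter_ordS_pred -x_pred.
by congr (x 0 (ord_pred _)); apply: val_inj; rewrite val_iter_ordS add0n modn_small.
Qed.

Lemma pair_weight_generator : (pair_weight (poly_rV g : 'rV[F]_n) <= 6)%N.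
Proof.
rewrite pair_weight_count poly_rV_K ?size_g_le // -size_filter.
rewrite -[6%N]/(size [:: 0; 1; 2; 3; 4; n.-1]%N); apply: uniq_leq_size.
  by rewrite filter_uniq ?iota_uniq.
move=> k; rewrite mem_filter mem_iota /pair_nz !inE => /and3P[g_k _ lt_kn].
apply: contraTT g_k; rewrite negb_or => k_out.
have -> : (k.+1 %% n = k.+1)%N by rewrite modn_small; lia.
by rewrite !nth_default ?eqxx // size_g; lia.
Qed.

Theorem cyclic_code_MDS_pair6 : MDS_symbol_pair (cyclic_code n g) 6.
Proof.
have g_in : poly_rV g \in cyclic_code n g.
  by rewrite mem_cyclic_code poly_rV_K ?size_g_le.
have g_rV_neq0 : poly_rV g != 0 :> 'rV_n.
  apply: contra_neq generator_neq0 => /(congr1 rVpoly).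
  by rewrite poly_rV_K ?size_g_le // linear0.
split; last by rewrite card_cyclic_code size_g; congr (_ ^ _)%N; lia.
split.
  exists (poly_rV g), 0; split; rewrite // ?mem_cyclic_code ?linear0 ?dvdp0 //.
  by apply/eqP; rewrite eqn_leq pair_dist_weight subr0 pair_weight_generator pair_weight_code_ge6.
move=> x y x_in y_in x_neq_y; rewrite pair_dist_weight pair_weight_code_ge6 ?subr_eq0 //.
by move: x_in y_in; rewrite !mem_cyclic_code linearB; apply: dvdp_sub.
Qed.

End MinimumPairDistance.

End CyclicCode.

Section SparseRoots.
Variable F : fieldType.

Lemma root_deriv_sq_dvd (z : F) (q : {poly F}) : ('X - z%:P) ^+ 2 %| q -> root q^`() z.
Proof.
case/dvdpP => r ->; rewrite rootE derivM deriv_exp !hornerE subrr expr0n /=.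
by rewrite !(mulr0, addr0).
Qed.

Lemma binomial_root_expr (a b z : F) m : b != 0 ->
  root (a%:P + b *: 'X^m) 1 -> root (a%:P + b *: 'X^m) z -> z ^+ m = 1.
Proof.
move=> b_neq0; rewrite !rootE !hornerE expr1n mulr1 => /eqP root1 /eqP rootz.
have : b * (z ^+ m - 1) = 0.
  by rewrite -[RHS](subrr 0) -{1}rootz -root1; ring.
by move/eqP; rewrite mulf_eq0 (negbTE b_neq0) subr_eq0 => /eqP.
Qed.

Lemma binomial_double_root_char (a b z : F) m : b != 0 -> z != 0 ->
  ('X - z%:P) ^+ 2 %| a%:P + b *: 'X^m -> m%:R = 0 :> F.
Proof.
move=> b_neq0 z_neq0 /root_deriv_sq_dvd.
rewrite rootE derivD derivC derivZ derivXn add0r hornerZ hornerMn hornerXn.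
by rewrite -mulr_natr !mulf_eq0 (negbTE b_neq0) expf_eq0 (negbTE z_neq0) andbF => /eqP.
Qed.

Lemma trinomial_roots_pm1_even (a b d : F) i j : 2%:R != 0 :> F ->
  a != 0 -> b != 0 -> d != 0 ->
  root (a%:P + b *: 'X^i + d *: 'X^j) 1 -> root (a%:P + b *: 'X^i + d *: 'X^j) (-1) ->
  ~~ odd i && ~~ odd j.
Proof.
move=> Fp_two_neq0 a_neq0 b_neq0 d_neq0.
have double_eq0 (x : F) : x *+ 2 = 0 -> x = 0.
  by move/eqP; rewrite -mulr_natr mulf_eq0 (negbTE Fp_two_neq0) orbF => /eqP.
rewrite !rootE !hornerE !expr1n !mulr1 -(signr_odd _ i) -(signr_odd _ j).
case: (odd i); case: (odd j); rewrite /= ?expr1 ?expr0 ?mulr1 ?mulrN1 => /eqP e1 /eqP e2.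
- by case/eqP: a_neq0; apply: double_eq0; rewrite -[RHS](addr0 0) -{1}e1 -e2; ring.
- by case/eqP: b_neq0; apply: double_eq0; rewrite -[RHS](subrr 0) -{1}e1 -e2; ring.
- by case/eqP: d_neq0; apply: double_eq0; rewrite -[RHS](subrr 0) -{1}e1 -e2; ring.
- by [].
Qed.

End SparseRoots.

Lemma lcm_code_length (l p : nat) :
  (if odd l then 2 * l * p else l * p)%N = (lcmn 2 l * p)%N.
Proof.
case: ifP => [l_odd | /negbT l_even]; congr (_ * _)%N.
  by rewrite /lcmn (eqP (_ : coprime 2 l)) ?divn1 ?coprime2n.
by apply/esym/lcmn_idPr; rewrite dvdn2.
Qed.

Section Proposition.
Variables (p l : nat) (w : 'F_p).
Hypotheses (p_pr : prime p) (p_odd : odd p) (l_gt2 : (2 < l)%N) (l_dvd : (l %| p.-1)%N).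
Hypothesis w_prim : l.-primitive_root w.

Local Notation n := (lcmn 2 l * p)%N.

Definition base_roots : seq 'F_p := [:: 1; -1; w].

Definition base_poly : {poly 'F_p} := \prod_(z <- base_roots) ('X - z%:P).

Lemma Fp_two_neq0 : 2%:R != 0 :> 'F_p.
Proof.
rewrite -(dvdn_pcharf (pchar_Fp p_pr)); apply: contraL p_odd.
move=> /(dvdn_leq (isT : (0 < 2)%N)); have := prime_gt1 p_pr.
by case: (p) => [|[|[|]]].
Qed.

Lemma prim_root_small k : (0 < k)%N -> w ^+ k = 1 -> (l <= k)%N.
Proof. by move=> k_gt0 w_k; apply: dvdn_leq k_gt0 _; rewrite (prim_order_dvd w_prim) w_k. Qed.

Lemma Fp_one_neq_N1 : 1 != -1 :> 'F_p.
Proof. by apply: contraNneq Fp_two_neq0 => one_eq; rewrite mulr2n {2}one_eq subrr. Qed.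

Lemma uniq_base_roots : uniq base_roots.
Proof.
have one_neq_w : 1 != w.
  apply/eqP => w_eq; have := @prim_root_small 1 isT.
  by rewrite -w_eq expr1n => /(_ erefl); lia.
have N1_neq_w : -1 != w.
  apply/eqP => w_eq; have := @prim_root_small 2 isT.
  by rewrite -w_eq sqrrN expr1n => /(_ erefl); lia.
by rewrite /= !inE !negb_or one_neq_w N1_neq_w Fp_one_neq_N1.
Qed.

Lemma base_root_neq0 z : z \in base_roots -> z != 0.
Proof.
rewrite !inE => /or3P[] /eqP ->; rewrite ?oppr_eq0 ?oner_eq0 //.
apply/eqP => w0; have l_gt0 : (0 < l)%N by lia.
by move: (prim_expr_order w_prim) => /eqP; rewrite w0 expr0n gtn_eqF // eq_sym oner_eq0.
Qed.

Lemma base_root_unity z : z \in base_roots -> z ^+ lcmn 2 l = 1.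
Proof.
rewrite !inE => /or3P[] /eqP ->; first exact: expr1n.
  by rewrite -signr_odd (_ : odd _ = false) //; apply/negbTE; rewrite -dvdn2 dvdn_lcml.
by apply/eqP; rewrite -(prim_order_dvd w_prim) dvdn_lcmr.
Qed.

Lemma XsubC_dvd_base_poly z : z \in base_roots -> 'X - z%:P %| base_poly.
Proof. by rewrite dvdp_XsubCl root_prod_XsubC. Qed.

Lemma base_poly_dvd : base_poly %| 'X^(lcmn 2 l) - 1.
Proof.
apply: uniq_roots_dvdp; last by rewrite uniq_rootsE uniq_base_roots.
by apply/allP => z /base_root_unity z_unity; rewrite rootE !hornerE z_unity subrr.
Qed.

Lemma Xn_sub1_expp k : ('X^k - 1 : {poly 'F_p}) ^+ p = 'X^(k * p) - 1.
Proof.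
have pchar_p : [pchar {poly 'F_p}].-nat p.
  rewrite (eq_pnat _ (pcharf_eq (_ : p \in [pchar {poly 'F_p}]))) ?pnat_id //.
  by rewrite pchar_poly pchar_Fp.
by rewrite exprDn_pchar // -exprM -signr_odd p_odd expr1.
Qed.

Lemma generator_dvd z : z \in base_roots -> base_poly * ('X - z%:P) %| 'X^n - 1.
Proof.
move=> z_root; rewrite -Xn_sub1_expp.
apply: dvdp_trans (dvdp_exp2r _ base_poly_dvd).
apply: (@dvdp_trans _ (base_poly ^+ 2)); last by rewrite dvdp_exp2l // prime_gt1.
by rewrite expr2 dvdp_mul // XsubC_dvd_base_poly.
Qed.

Lemma size_generator z : size (base_poly * ('X - z%:P)) = 5%N.
Proof.
rewrite size_mul ?size_prod_XsubC ?size_XsubC ?polyXsubC_eq0 //.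
by rewrite -size_poly_eq0 size_prod_XsubC.
Qed.

Lemma dvdn_code_length m : ~~ odd m -> (l %| m)%N -> (p %| m)%N -> (n %| m)%N.
Proof.
move=> m_even l_m p_m.
have l_lt_p : (l < p)%N.
  by have := dvdn_leq _ l_dvd; have := prime_gt1 p_pr; case: (p) => [|[|q]] //=; lia.
have coprime_p_lcm : coprime p (lcmn 2 l).
  apply: (@coprime_dvdr _ (2 * l)); first by rewrite dvdn_lcm dvdn_mulr ?dvdn_mull.
  by rewrite coprimeMr coprimen2 p_odd prime_coprime // gtnNdvd //; lia.
by rewrite Gauss_dvd 1?coprime_sym // dvdn_lcm dvdn2 m_even l_m p_m.
Qed.

Lemma root_generator_multiple z x (q : {poly 'F_p}) : x \in base_roots ->
  base_poly * ('X - z%:P) %| q -> root q x.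
Proof.
move=> x_root g_q; rewrite -dvdp_XsubCl; apply: dvdp_trans g_q.
exact/dvdp_mulr/XsubC_dvd_base_poly.
Qed.

Lemma generator_no_binomial z (a b : 'F_p) m : z \in base_roots ->
  a != 0 -> b != 0 -> (0 < m < n)%N -> ~~ (base_poly * ('X - z%:P) %| a%:P + b *: 'X^m).
Proof.
move=> z_root a_neq0 b_neq0 /andP[m_gt0 m_lt]; apply/negP => g_q.
have unity_m x : x \in base_roots -> x ^+ m = 1.
  by move=> x_root; apply: (binomial_root_expr b_neq0); apply: root_generator_multiple g_q.
have m_even : ~~ odd m.
  apply: contraNN Fp_one_neq_N1 => m_odd.
  have := unity_m (-1); rewrite -signr_odd m_odd expr1 => -> //.
  by rewrite !inE eqxx orbT.
have l_m : (l %| m)%N by rewrite (prim_order_dvd w_prim) unity_m // !inE eqxx !orbT.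
have p_m : (p %| m)%N.
  rewrite (dvdn_pcharf (pchar_Fp p_pr)); apply/eqP.
  apply: (binomial_double_root_char b_neq0 (base_root_neq0 z_root)); apply: dvdp_trans g_q.
  by rewrite expr2 dvdp_mul // XsubC_dvd_base_poly.
by have := dvdn_leq m_gt0 (dvdn_code_length m_even l_m p_m); lia.
Qed.

Lemma generator_no_trinomial z (a b d : 'F_p) i j :
  a != 0 -> b != 0 -> d != 0 -> (i == 1%N) || (j == i.+1) ->
  ~~ (base_poly * ('X - z%:P) %| a%:P + b *: 'X^i + d *: 'X^j).
Proof.
move=> a_neq0 b_neq0 d_neq0 ij_adj; apply/negP => g_q.
have root_q x : x \in base_roots -> root (a%:P + b *: 'X^i + d *: 'X^j) x.
  by move=> x_root; apply: root_generator_multiple g_q.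
have := trinomial_roots_pm1_even Fp_two_neq0 a_neq0 b_neq0 d_neq0 (root_q 1 _) (root_q (-1) _).
rewrite !inE eqxx orbT => /(_ isT isT).
by case/orP: ij_adj => /eqP-> //=; rewrite negbK andNb.
Qed.

Theorem generator_MDS_pair z : z \in base_roots ->
  MDS_symbol_pair (cyclic_code n (base_poly * ('X - z%:P))) 6.
Proof.
move=> z_root; have p_gt2 : (2 < p)%N.
  by have := prime_gt1 p_pr; case: (p) p_odd => [|[|[|]]].
have l_le_lcm : (l <= lcmn 2 l)%N by rewrite dvdn_leq ?lcmn_gt0 ?dvdn_lcmr //; lia.
apply: cyclic_code_MDS_pair6; rewrite ?size_generator ?generator_dvd //; try nia.
- by move=> a b m; apply: generator_no_binomial.
- by move=> a b d i j a_neq0 b_neq0 d_neq0 _; apply: generator_no_trinomial.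
Qed.

End Proposition.

Theorem proposition3p2 (p l : nat) (w : 'F_p) :
  prime p -> odd p -> (2 < l)%N -> (l %| p.-1)%N -> l.-primitive_root w ->
  let n := (if odd l then 2 * l * p else l * p)%N in
  forall r : nat * nat * nat,
    r \in [:: (2, 1, 1); (1, 2, 1); (1, 1, 2)]%N ->
    MDS_symbol_pair
      (cyclic_code n (('X - 1) ^+ r.1.1 * ('X + 1) ^+ r.1.2 * ('X - w%:P) ^+ r.2))
      6.
Proof.
move=> p_pr p_odd l_gt2 l_dvd w_prim n r; rewrite /n lcm_code_length.
have MDS := generator_MDS_pair p_pr p_odd l_gt2 l_dvd w_prim.
have base_polyE : base_poly w = ('X - 1) * ('X + 1) * ('X - w%:P).
  by rewrite /base_poly !big_cons big_nil polyCN opprK polyC1 mulr1 mulrA.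
rewrite !inE => /or3P[] /eqP -> /=.
- rewrite (_ : _ * _ = base_poly w * ('X - 1%:P)); first by apply: MDS; rewrite !inE eqxx.
  by rewrite base_polyE polyC1; ring.
- rewrite (_ : _ * _ = base_poly w * ('X - (-1)%:P)); first by apply: MDS; rewrite !inE eqxx orbT.
  by rewrite base_polyE polyCN polyC1; ring.
- rewrite (_ : _ * _ = base_poly w * ('X - w%:P)); first by apply: MDS; rewrite !inE eqxx !orbT.
  by rewrite base_polyE; ring.
Qed.
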